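(* Let $v\geq 7$ be an integer with $v\equiv 1$ or $7\pmod{14}$. Then $K^*_v$ has a $D_i$-decomposition for every $i\in[1,7]$.
   Context: $K^*_v$ denotes the complete symmetric digraph of order $v$: it has $v$ vertices and contains both arcs $(x,y)$ and $(y,x)$ for every pair of distinct vertices $x,y$. A $D$-decomposition of a digraph $K$ is a set of subdigraphs of $K$, each isomorphic to $D$, such that every arc of $K$ lies in exactly one of them. For distinct vertices $v_0,\dots,v_6$, the digraphs $D_i[v_0,v_1,\dots,v_6]$ ($i\in[1,7]$) all have vertex set $\{v_0,\dots,v_6\}$ and the following arc sets: $D_1$: $(v_1,v_0),(v_1,v_2),(v_2,v_3),(v_3,v_4),(v_4,v_5),(v_5,v_6),(v_6,v_0)$; $D_2$: $(v_1,v_0),(v_2,v_1),(v_2,v_3),(v_3,v_4),(v_4,v_5),(v_5,v_6),(v_6,v_0)$; $D_3$: $(v_1,v_0),(v_1,v_2),(v_3,v_2),(v_3,v_4),(v_4,v_5),(v_5,v_6),(v_6,v_0)$; $D_4$: $(v_1,v_0),(v_1,v_2),(v_2,v_3),(v_4,v_3),(v_4,v_5),(v_5,v_6),(v_6,v_0)$; $D_5$: $(v_1,v_0),(v_2,v_1),(v_3,v_2),(v_3,v_4),(v_4,v_5),(v_5,v_6),(v_6,v_0)$; $D_6$: $(v_1,v_0),(v_2,v_1),(v_2,v_3),(v_3,v_4),(v_5,v_4),(v_5,v_6),(v_6,v_0)$; $D_7$: $(v_1,v_0),(v_1,v_2),(v_3,v_2),(v_3,v_4),(v_4,v_5),(v_6,v_5),(v_6,v_0)$.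 $D_i$ also denotes the isomorphism type of $D_i[v_0,\dots,v_6]$. *)

From mathcomp Require Import all_boot.
Set Implicit Arguments. Unset Strict Implicit. Unset Printing Implicit Defensive.

Definition Darcs {T : Type} (i : nat) (v0 v1 v2 v3 v4 v5 v6 : T) : seq (T * T) :=
  match i with
  | 1 => [:: (v1,v0); (v1,v2); (v2,v3); (v3,v4); (v4,v5); (v5,v6); (v6,v0)]
  | 2 => [:: (v1,v0); (v2,v1); (v2,v3); (v3,v4); (v4,v5); (v5,v6); (v6,v0)]
  | 3 => [:: (v1,v0); (v1,v2); (v3,v2); (v3,v4); (v4,v5); (v5,v6); (v6,v0)]
  | 4 => [:: (v1,v0); (v1,v2); (v2,v3); (v4,v3); (v4,v5); (v5,v6); (v6,v0)]
  | 5 => [:: (v1,v0); (v2,v1); (v3,v2); (v3,v4); (v4,v5); (v5,v6); (v6,v0)]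
  | 6 => [:: (v1,v0); (v2,v1); (v2,v3); (v3,v4); (v5,v4); (v5,v6); (v6,v0)]
  | 7 => [:: (v1,v0); (v1,v2); (v3,v2); (v3,v4); (v4,v5); (v6,v5); (v6,v0)]
  | _ => [::]
  end.

Definition block_arcs (v i : nat) (b : 7.-tuple 'I_v) : seq ('I_v * 'I_v) :=
  Darcs i (tnth b (inord 0)) (tnth b (inord 1)) (tnth b (inord 2))
          (tnth b (inord 3)) (tnth b (inord 4)) (tnth b (inord 5))
          (tnth b (inord 6)).

(* K*_v has vertex set 'I_v and arcs (x,y) for all x != y. *)
Definition has_D_decomposition (v i : nat) : Prop :=
  exists B : seq (7.-tuple 'I_v),
    (forall b, b \in B -> uniq b) /\
    (forall x y : 'I_v, x != y ->
       count (fun b => (x, y) \in block_arcs i b) B = 1).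

(* The arcs of D_i orient the edges of the 7-cycle v0 v1 ... v6 v0.  For v = 14k+1,
   take k base 7-cycles c_j in Z_v whose 14k edge differences +-(c_j(t+1) - c_j(t))
   are exactly the nonzero residues.  Develop every c_j and its negative -c_j over
   Z_v and orient each translate as D_i: whichever way D_i orients an edge, the
   translates of c_j and -c_j realise both of its differences, so every arc (x, y)
   lies in exactly one block.  For v = 14k+7 = 7(2k+1) the edge differences miss
   exactly the multiples of 2k+1; those arcs join vertices of the same residue class
   mod 2k+1, a copy of K*_7, which is decomposed by an explicit D_i-decomposition
   of K*_7. *)

From mathcomp Require Import all_boot all_algebra zify.
Set Implicit Arguments. Unset Strict Implicit. Unset Printing Implicit Defensive.
Import GRing.Theory.

Definition Dshape (i : nat) : seq ('I_7 * 'I_7) :=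
  Darcs i (inZp 0) (inZp 1) (inZp 2) (inZp 3) (inZp 4) (inZp 5) (inZp 6).

Definition shape_arcs (T : Type) (i : nat) (b : 7.-tuple T) : seq (T * T) :=
  [seq (tnth b p.1, tnth b p.2) | p <- Dshape i].

Lemma block_arcsE v i (b : 7.-tuple 'I_v) : block_arcs i b = shape_arcs i b.
Proof.
have inordE k : k < 7 -> inord k = inZp k :> 'I_7.
  by move=> lt_k7; apply: val_inj; rewrite /= inordK // modn_small.
by rewrite /block_arcs !inordE //; case: i => [|[|[|[|[|[|[|[|i]]]]]]]].
Qed.

Lemma shape_arcs_map (T U : Type) (f : T -> U) i (b : 7.-tuple T) :
  shape_arcs i (map_tuple f b) = [seq (f p.1, f p.2) | p <- shape_arcs i b].
Proof. by rewrite /shape_arcs -map_comp; apply: eq_map => p /=; rewrite !tnth_map. Qed.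

Lemma Dshape_uniq i : uniq (Dshape i).
Proof. by case: i => [|[|[|[|[|[|[|[|i]]]]]]]]; vm_compute. Qed.

Lemma Dshape_cycle i : 1 <= i <= 7 -> exists flip : pred nat,
  Dshape i = [seq if flip t then (inZp t.+1, inZp t) else (inZp t, inZp t.+1) | t <- iota 0 7].
Proof.
case: i => [|[|[|[|[|[|[|[|i]]]]]]]] //= _;
  [ exists (mem [:: 0])
  | exists (mem [:: 0; 1])
  | exists (mem [:: 0; 2])
  | exists (mem [:: 0; 3])
  | exists (mem [:: 0; 1; 2])
  | exists (mem [:: 0; 1; 4])
  | exists (mem [:: 0; 2; 5]) ]; by apply/eqP; vm_compute.
Qed.

Lemma sum_Dshape_sym i (F : 'I_7 * 'I_7 -> nat) : 1 <= i <= 7 ->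
    (forall a b, F (a, b) = F (b, a)) ->
  \sum_(p <- Dshape i) F p = \sum_(t <- iota 0 7) F (inZp t, inZp t.+1).
Proof.
move=> /Dshape_cycle[flip ->] Fsym; rewrite big_map.
by apply: eq_bigr => t _; case: (flip t).
Qed.

Lemma shape_arcs_uniq (T : eqType) i (b : 7.-tuple T) : uniq b -> uniq (shape_arcs i b).
Proof.
move=> /tuple_uniqP inj_b; rewrite map_inj_uniq ?Dshape_uniq //.
by case=> [a1 a2] [b1 b2] /= [/inj_b -> /inj_b ->].
Qed.

Lemma count_sumE (T : Type) (a : pred T) (s : seq T) : count a s = \sum_(x <- s) a x.
Proof. by elim: s => [|x s IHs]; rewrite ?big_nil ?big_cons //= IHs. Qed.

Lemma count_andl (T : Type) (c : bool) (a : pred T) (s : seq T) :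
  count (fun x => c && a x) s = c * count a s.
Proof. by case: c; rewrite ?mul1n ?mul0n //; elim: s. Qed.

Lemma count_enum_ord_eq m r : r < m -> count (fun s : 'I_m => r == s) (enum 'I_m) = 1.
Proof.
move=> lt_rm.
have -> : count (fun s : 'I_m => r == s) (enum 'I_m) = count (pred1 r) (map val (enum 'I_m)).
  by rewrite [RHS]count_map; apply: eq_count => s; rewrite /= eq_sym.
by rewrite val_enum_ord count_uniq_mem ?iota_uniq // mem_iota add0n lt_rm.
Qed.

Lemma perm_iota_sym_cover n (s : seq nat) :
    size s = n -> (forall d, d \in s -> n.+1 - d \in s) ->
    (forall d, 0 < d -> d.*2 <= n.+1 -> d \in s) ->
  perm_eq s (iota 1 n).
Proof.
move=> size_s sym_s cover_s.
have sub_s : {subset iota 1 n <= s}.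
  move=> d; rewrite mem_iota => /andP[d_gt0 d_le].
  have [d_half | d_big] := leqP d.*2 n.+1; first exact: cover_s.
  have -> : d = n.+1 - (n.+1 - d) by lia.
  by apply/sym_s/cover_s; lia.
have le_size : size s <= size (iota 1 n) by rewrite size_s size_iota.
have [_ eq_s] := uniq_min_size (iota_uniq 1 n) sub_s le_size.
by apply: uniq_perm (leq_size_uniq (iota_uniq 1 n) sub_s le_size) (iota_uniq 1 n) _ => d; rewrite eq_s.
Qed.

Lemma modn_wrap a b v : a = b \/ a = b + v -> a %% v = b %% v.
Proof. by case=> ->; rewrite ?modnDr. Qed.

Section Development.
Variable G : finZmodType.
Local Open Scope ring_scope.

Definition translate (s : G) (b : 7.-tuple G) := map_tuple (fun x => x + s) b.
Definition negate (b : 7.-tuple G) := map_tuple -%R b.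
Definition develop (B : seq (7.-tuple G)) := [seq translate s b | b <- B, s <- enum G].

Lemma negate_uniq (b : 7.-tuple G) : uniq (negate b) = uniq b.
Proof. by rewrite map_inj_uniq //; apply: oppr_inj. Qed.

Lemma develop_uniq (B : seq (7.-tuple G)) :
  (forall b, b \in B -> uniq b) -> forall b, b \in develop B -> uniq b.
Proof.
move=> uB _ /allpairsP[[b s] [/uB ub _ ->]].
by rewrite map_inj_uniq //; apply: addIr.
Qed.

Lemma count_enum_pred1_and (a : G) (c : bool) : count (fun s => (s == a) && c) (enum G) = c.
Proof.
case: c; last by rewrite (eq_count (a2 := pred0)) ?count_pred0 // => s; rewrite andbF.
by rewrite (eq_count (a2 := pred1 a)) => [|s]; rewrite ?andbT // count_uniq_mem ?enum_uniq ?mem_enum.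
Qed.

Lemma count_translate_mem (A : seq (G * G)) (x y : G) : uniq A ->
  count (fun s => (x, y) \in [seq (p.1 + s, p.2 + s) | p <- A]) (enum G)
  = count (fun p => p.2 - p.1 == y - x) A.
Proof.
move=> uA; have shift_uniq s : uniq [seq (p.1 + s, p.2 + s) | p <- A].
  by rewrite map_inj_uniq // => -[a1 a2] [b1 b2] /= [/addIr -> /addIr ->].
rewrite count_sumE.
under eq_bigr => s _ do rewrite -(count_uniq_mem _ (shift_uniq s)) count_map count_sumE.
rewrite exchange_big count_sumE; apply: eq_bigr => -[p1 p2] _ /=.
rewrite -count_sumE -(count_enum_pred1_and (x - p1) (p2 - p1 == y - x)).
apply: eq_count => s /=; rewrite xpair_eqE.
have [-> | ne_s] := eqVneq s (x - p1).
  by rewrite (addrC p1) subrK eqxx /= addrCA (addrC x) eq_sym -subr_eq eq_sym.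
by rewrite andFb; apply: contraNF ne_s => /andP[/eqP <- _]; rewrite addrC addKr.
Qed.

Variable i : nat.
Hypothesis i_range : (1 <= i <= 7)%N.

Lemma count_develop (B : seq (7.-tuple G)) (x y : G) :
  (forall b, b \in B -> uniq b) ->
  count (fun b => (x, y) \in shape_arcs i b) (develop B)
  = (\sum_(b <- B) count (fun p => (p.2 - p.1 == y - x)%R) (shape_arcs i b))%N.
Proof.
move=> uB; rewrite /develop count_flatten sumnE !big_map big_seq [RHS]big_seq.
apply: eq_bigr => b /uB ub; rewrite count_map -(count_translate_mem _ _ (shape_arcs_uniq i ub)).
by apply: eq_count => s; rewrite /= shape_arcs_map.
Qed.

Definition edge_diff (c : 7.-tuple G) t := tnth c (inZp t.+1) - tnth c (inZp t).

Definition cycle_diffs (c : 7.-tuple G) : seq G :=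
  flatten [seq [:: edge_diff c t; - edge_diff c t] | t <- iota 0 7].

Lemma count_shape_arcs_negate (b : 7.-tuple G) (d : G) :
  count (fun p => p.2 - p.1 == d) (shape_arcs i (negate b))
  = count (fun p => p.1 - p.2 == d) (shape_arcs i b).
Proof. by rewrite shape_arcs_map count_map; apply: eq_count => p; rewrite /= opprK addrC. Qed.

Lemma count_shape_arcs_sym (c : 7.-tuple G) (d : G) :
  (count (fun p => (p.2 - p.1 == d)%R) (shape_arcs i c)
    + count (fun p => (p.1 - p.2 == d)%R) (shape_arcs i c))%N
  = count (pred1 d) (cycle_diffs c).
Proof.
rewrite /cycle_diffs count_flatten sumnE big_map !count_map !count_sumE -big_split.
rewrite (sum_Dshape_sym (F := fun p => ((tnth c p.2 - tnth c p.1 == d)%R + (tnth c p.1 - tnth c p.2 == d)%R)%N) i_range)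
  => [|a b]; last exact: addnC.
rewrite big_map; apply: eq_bigr => t _.
by rewrite /= opprB addn0.
Qed.

Lemma count_develop_sym (C : seq (7.-tuple G)) (x y : G) :
  (forall c, c \in C -> uniq c) ->
  count (fun b => (x, y) \in shape_arcs i b) (develop (C ++ map negate C))
  = count (pred1 (y - x)) (flatten (map cycle_diffs C)).
Proof.
move=> uC; rewrite count_develop => [|b]; last first.
  by rewrite mem_cat => /orP[/uC // | /mapP[c /uC uc ->]]; rewrite negate_uniq.
rewrite big_cat /= big_map -big_split /=.
rewrite count_flatten sumnE !big_map; apply: eq_bigr => c _.
by rewrite count_shape_arcs_negate count_shape_arcs_sym.
Qed.
End Development.

Arguments negate {G}.
Arguments develop {G}.
Arguments cycle_diffs {G}.

Section ZpNat.
Variable n : nat.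

Lemma inZpD a b : (inZp a + inZp b)%R = inZp (a + b) :> 'I_n.+1.
Proof. by apply: val_inj; rewrite /= modnDm. Qed.

Lemma inZpN a : a <= n.+1 -> (- inZp a)%R = inZp (n.+1 - a) :> 'I_n.+1.
Proof.
rewrite leq_eqVlt => /orP[/eqP -> | lt_a]; last by apply: val_inj; rewrite /= (modn_small lt_a).
by apply: val_inj; rewrite /= modnn subn0 subnn modnn mod0n.
Qed.

Lemma val_subr_gt0 (x y : 'I_n.+1) : x != y -> 0 < val (y - x)%R.
Proof. by rewrite lt0n -[0%N]/(val (0 : 'I_n.+1)%R) val_eqE subr_eq0 eq_sym. Qed.

Lemma inZp_eq a (x : 'I_n.+1) : a <= n -> (inZp a == x) = (a == val x).
Proof. by move=> le_a; rewrite -val_eqE /= modn_small. Qed.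

Definition cycle_of (L : seq nat) : 7.-tuple 'I_n.+1 := [tuple inZp (nth 0 L t) | t < 7].

Lemma cycle_of_uniq L : size L = 7 -> all (fun a => a <= n) L -> uniq L -> uniq (cycle_of L).
Proof.
move=> size_L /allP le_L uL; apply/tuple_uniqP => t1 t2; rewrite !tnth_mktuple => /eqP.
rewrite inZp_eq ?le_L ?mem_nth ?size_L //= modn_small ?ltnS ?le_L ?mem_nth ?size_L //.
by rewrite nth_uniq ?size_L // => /eqP /val_inj.
Qed.

Definition edge_diffs (W : seq nat) : seq nat :=
  flatten [seq [:: nth 0 W t; n.+1 - nth 0 W t] | t <- iota 0 7].

Lemma cycle_diffs_of L W :
    (forall t, t < 7 -> nth 0 W t <= n) ->
    (forall t, t < 7 -> (nth 0 L t + nth 0 W t) %% n.+1 = nth 0 L (t.+1 %% 7) %% n.+1) ->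
  cycle_diffs (cycle_of L) = map inZp (edge_diffs W).
Proof.
move=> le_W edge_W; rewrite /cycle_diffs /edge_diffs map_flatten -map_comp.
congr flatten; apply/eq_in_map => t; rewrite mem_iota add0n => /andP[_ lt_t7].
have diffE : edge_diff (cycle_of L) t = inZp (nth 0 W t).
  apply/eqP; rewrite /edge_diff !tnth_mktuple /= subr_eq inZpD (modn_small lt_t7).
  by rewrite -val_eqE /= addnC edge_W.
by rewrite diffE inZpN // leqW // le_W.
Qed.
End ZpNat.

Section CyclicFamilies.
Variable n : nat.

Definition cycle_family k (L : nat -> seq nat) : seq (7.-tuple 'I_n.+1) :=
  [seq cycle_of n (L j) | j <- iota 0 k].

Definition diff_family k (W : nat -> seq nat) : seq nat :=
  flatten [seq edge_diffs n (W j) | j <- iota 0 k].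

Lemma mem_diff_family k W j t d : j < k -> t < 7 ->
  d = nth 0 (W j) t \/ d = n.+1 - nth 0 (W j) t -> d \in diff_family k W.
Proof.
move=> lt_jk lt_t7 dE; apply/flattenP; exists (edge_diffs n (W j)).
  by apply: map_f; rewrite mem_iota.
apply/flattenP; exists [:: nth 0 (W j) t; n.+1 - nth 0 (W j) t]; first by apply: map_f; rewrite mem_iota.
by rewrite !inE; case: dE => ->; rewrite eqxx ?orbT.
Qed.

Lemma diff_family_sym k W d :
    (forall j t, j < k -> t < 7 -> nth 0 (W j) t <= n.+1) ->
  d \in diff_family k W -> n.+1 - d \in diff_family k W.
Proof.
move=> le_W /flattenP[_ /mapP[j j_in ->] /flattenP[_ /mapP[t t_in ->]]].
move: j_in t_in; rewrite !mem_iota !add0n => /andP[_ lt_jk] /andP[_ lt_t7].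
rewrite !inE => /orP[] /eqP ->; apply: (mem_diff_family lt_jk lt_t7); first by right.
by left; rewrite subKn // le_W.
Qed.

Lemma size_diff_family k W : size (diff_family k W) = 14 * k.
Proof.
rewrite /diff_family size_flatten /shape -map_comp (eq_map (g := fun=> 14)) //.
by rewrite sumnE big_map big_const_seq count_predT size_iota iter_addn_0 mulnC.
Qed.

Lemma count_inZp_perm (N E : seq nat) (d : 'I_n.+1) :
  perm_eq (N ++ E) (iota 1 n) -> 0 < d ->
  count (pred1 d) (map inZp N) + count (pred1 (val d)) E = 1.
Proof.
move=> pNE d_gt0; have le_N a : a \in N -> a <= n.
  by move=> Na; have := perm_mem pNE a; rewrite mem_cat Na mem_iota /= => /esym; lia.
rewrite count_map (eq_in_count (a2 := pred1 (val d))) => [|a /le_N le_a]; last exact: inZp_eq.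
rewrite -count_cat (permP pNE) count_uniq_mem ?iota_uniq // mem_iota d_gt0 /=.
by rewrite add1n ltn_ord.
Qed.

Lemma cycle_family_develop_uniq k L :
    (forall j, j < k -> uniq (cycle_of n (L j))) ->
  let C := cycle_family k L in forall b, b \in develop (C ++ map negate C) -> uniq b.
Proof.
move=> uL C; have uC c : c \in C -> uniq c.
  by move=> /mapP[j]; rewrite mem_iota => /andP[_ /uL uc] ->.
apply: develop_uniq => b; rewrite mem_cat => /orP[/uC // | /mapP[c /uC uc ->]].
by rewrite negate_uniq.
Qed.

Lemma cyclic_count i k L W E (x y : 'I_n.+1) : 1 <= i <= 7 ->
    (forall j, j < k -> uniq (cycle_of n (L j))) ->
    (forall j t, j < k -> t < 7 ->
       (nth 0 (L j) t + nth 0 (W j) t) %% n.+1 = nth 0 (L j) (t.+1 %% 7) %% n.+1) ->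
    perm_eq (diff_family k W ++ E) (iota 1 n) -> x != y ->
  let C := cycle_family k L in
  count (fun b => (x, y) \in block_arcs i b) (develop (C ++ map negate C))
    + count (pred1 (val (y - x)%R)) E = 1.
Proof.
move=> i_range uL edgeLW pWE neq_xy C.
have le_W j t : j < k -> t < 7 -> nth 0 (W j) t <= n.
  move=> lt_jk lt_t7; have := perm_mem pWE (nth 0 (W j) t).
  by rewrite mem_cat (mem_diff_family lt_jk lt_t7 (or_introl erefl)) mem_iota; lia.
rewrite (eq_count (a2 := fun b => (x, y) \in shape_arcs i b)) => [|b]; last by rewrite block_arcsE.
rewrite count_develop_sym // => [|c /mapP[j]]; last by rewrite mem_iota => /andP[_ /uL uc] ->.
have diffsE : flatten (map cycle_diffs C) = map inZp (diff_family k W).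
  rewrite /diff_family map_flatten /C /cycle_family -!map_comp; congr flatten.
  apply/eq_in_map => j; rewrite mem_iota add0n => /andP[_ lt_jk] /=.
  by apply: cycle_diffs_of => t lt_t7; [exact: le_W | exact: edgeLW].
by rewrite diffsE count_inZp_perm // val_subr_gt0.
Qed.

Lemma has_D_decomposition_cyclic i k L W : 1 <= i <= 7 ->
    (forall j, j < k -> uniq (cycle_of n (L j))) ->
    (forall j t, j < k -> t < 7 ->
       (nth 0 (L j) t + nth 0 (W j) t) %% n.+1 = nth 0 (L j) (t.+1 %% 7) %% n.+1) ->
    perm_eq (diff_family k W) (iota 1 n) ->
  has_D_decomposition n.+1 i.
Proof.
move=> i_range uL edgeLW pW; set C := cycle_family k L.
exists (develop (C ++ map negate C)); split; first exact: cycle_family_develop_uniq.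
move=> x y neq_xy; rewrite -[RHS](cyclic_count (E := [::]) i_range uL edgeLW _ neq_xy).
  by rewrite addn0.
by rewrite cats0.
Qed.
End CyclicFamilies.

Definition cycleA k j := [:: 0; 8*k-1-2*j; 8*k-j; 9*k+1; 12*k+2+j; 10*k+1; 6*k-j].
Definition diffsA k j := [:: 8*k-1-2*j; j.+1; k+1+j; 3*k+1+j; 12*k-j; 10*k-j; 8*k+1+j].

Lemma cycleA_uniq k j : j < k -> uniq (cycle_of (14*k) (cycleA k j)).
Proof.
move=> lt_jk; apply: cycle_of_uniq => //=; rewrite ?inE ?negb_or.
  by repeat (apply/andP; split); lia.
by repeat (apply/andP; split); apply/eqP; lia.
Qed.

Lemma cycleA_edges k j t : j < k -> t < 7 ->
  (nth 0 (cycleA k j) t + nth 0 (diffsA k j) t) %% (14*k).+1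
  = nth 0 (cycleA k j) (t.+1 %% 7) %% (14*k).+1.
Proof. by move=> lt_jk; do 7?[case: t => [|t]] => // _; apply: modn_wrap => /=; lia. Qed.

Lemma diffsA_perm k : perm_eq (diff_family (14*k) k (diffsA k)) (iota 1 (14*k)).
Proof.
apply: perm_iota_sym_cover; first exact: size_diff_family.
  move=> d; apply: diff_family_sym => j t lt_jk.
  by do 7?[case: t => [|t]] => //= _; lia.
move=> d d_gt0 d_half; have := odd_double_half d; set e := d./2 => de.
have mem j t : j < k -> t < 7 ->
    d = nth 0 (diffsA k j) t \/ d = (14*k).+1 - nth 0 (diffsA k j) t ->
  d \in diff_family (14*k) k (diffsA k) by exact: mem_diff_family.
have [|lt_kd] := leqP d k; first by move=> ?; apply: (mem d.-1 1) => /=; lia.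
have [|lt_2kd] := leqP d (2*k); first by move=> ?; apply: (mem (d-k-1) 2) => /=; lia.
have [|lt_3kd] := leqP d (3*k); first by move=> ?; apply: (mem (d-2*k-1) 4) => /=; lia.
have [|lt_4kd] := leqP d (4*k); first by move=> ?; apply: (mem (d-3*k-1) 3) => /=; lia.
have [|lt_5kd] := leqP d (5*k); first by move=> ?; apply: (mem (d-4*k-1) 5) => /=; lia.
have [|lt_6kd] := leqP d (6*k); first by move=> ?; apply: (mem (6*k-d) 6) => /=; lia.
case: (boolP (odd d)) => [odd_d | even_d].
  by apply: (mem (4*k-1-e) 0) => /=; lia.
by apply: (mem (e-3*k-1) 0) => /=; lia.
Qed.

Lemma has_D_decomposition_14k1 k i : 1 <= i <= 7 -> has_D_decomposition (14*k).+1 i.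
Proof.
move=> i_range; apply: (has_D_decomposition_cyclic (L := cycleA k) (W := diffsA k) i_range).
- exact: cycleA_uniq.
- exact: cycleA_edges.
- exact: diffsA_perm.
Qed.

Definition cycleB k j := [:: 0; 8*k+3-2*j; 8*k+4-j; 9*k+5; 7*k+3-j; 10*k+5; 6*k+2-j].
Definition diffsB k j := [:: 8*k+3-2*j; j.+1; k+1+j; 12*k+5-j; 3*k+2+j; 10*k+4-j; 8*k+5+j].
Definition multiples m := [seq m * c | c <- iota 1 6].

Lemma cycleB_uniq k j : j < k -> uniq (cycle_of (14*k+6) (cycleB k j)).
Proof.
move=> lt_jk; apply: cycle_of_uniq => //=; rewrite ?inE ?negb_or.
  by repeat (apply/andP; split); lia.
by repeat (apply/andP; split); apply/eqP; lia.
Qed.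

Lemma cycleB_edges k j t : j < k -> t < 7 ->
  (nth 0 (cycleB k j) t + nth 0 (diffsB k j) t) %% (14*k+6).+1
  = nth 0 (cycleB k j) (t.+1 %% 7) %% (14*k+6).+1.
Proof. by move=> lt_jk; do 7?[case: t => [|t]] => // _; apply: modn_wrap => /=; lia. Qed.

Lemma diffsB_perm k :
  perm_eq (diff_family (14*k+6) k (diffsB k) ++ multiples (2*k+1)) (iota 1 (14*k+6)).
Proof.
have mem_mult d c : 0 < c < 7 -> d = (2*k+1) * c -> d \in multiples (2*k+1).
  by move=> c_range ->; apply: map_f; rewrite mem_iota; lia.
apply: perm_iota_sym_cover; first by rewrite size_cat size_diff_family size_map size_iota; lia.
  move=> d; rewrite !mem_cat => /orP[d_in | /mapP[c c_in ->]]; apply/orP.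
    left; apply: diff_family_sym d_in => j t lt_jk.
    by do 7?[case: t => [|t]] => //= _; lia.
  right; move: c_in; rewrite mem_iota => c_range; apply: (mem_mult _ (7 - c)); first lia.
  by rewrite mulnBr; congr (_ - _); lia.
move=> d d_gt0 d_half; have := odd_double_half d; set e := d./2 => de.
rewrite mem_cat; apply/orP.
have mem j t : j < k -> t < 7 ->
    d = nth 0 (diffsB k j) t \/ d = (14*k+6).+1 - nth 0 (diffsB k j) t ->
  d \in diff_family (14*k+6) k (diffsB k) by exact: mem_diff_family.
have [|lt_kd] := leqP d k; first by move=> ?; left; apply: (mem d.-1 1) => /=; lia.
have [|lt_2kd] := leqP d (2*k); first by move=> ?; left; apply: (mem (d-k-1) 2) => /=; lia.
have [|lt_2k1d] := leqP d (2*k+1); first by move=> ?; right; apply: (mem_mult _ 1); lia.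
have [|lt_3kd] := leqP d (3*k+1); first by move=> ?; left; apply: (mem (d-2*k-2) 3) => /=; lia.
have [|lt_4kd] := leqP d (4*k+1); first by move=> ?; left; apply: (mem (d-3*k-2) 4) => /=; lia.
have [|lt_4k2d] := leqP d (4*k+2); first by move=> ?; right; apply: (mem_mult _ 2); lia.
have [|lt_5kd] := leqP d (5*k+2); first by move=> ?; left; apply: (mem (d-4*k-3) 5) => /=; lia.
have [|lt_6kd] := leqP d (6*k+2); first by move=> ?; left; apply: (mem (6*k+2-d) 6) => /=; lia.
have [|lt_6k3d] := leqP d (6*k+3); first by move=> ?; right; apply: (mem_mult _ 3); lia.
left; case: (boolP (odd d)) => [odd_d | even_d].
  by apply: (mem (4*k+1-e) 0) => /=; lia.
by apply: (mem (e-3*k-2) 0) => /=; lia.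
Qed.

Lemma count_multiples m e : 0 < e < 7 * m -> count (pred1 e) (multiples m) = (m %| e).
Proof.
move=> e_range; have m_gt0 : 0 < m by lia.
rewrite count_uniq_mem; last by rewrite map_inj_uniq ?iota_uniq // => a b /eqP; rewrite eqn_pmul2l // => /eqP.
congr nat_of_bool; apply/mapP/dvdnP => [[c _ ->] | [c e_eq]]; first by exists c; rewrite mulnC.
exists c; last by rewrite mulnC.
by move: e_range; rewrite e_eq mem_iota -{1}(mul0n m) !ltn_pmul2r //; lia.
Qed.

Lemma dvdn_val_subr n m (x y : 'I_n.+1) : m %| n.+1 -> (m %| val (y - x)%R) = (x %% m == y %% m).
Proof.
move=> m_dvd; rewrite /dvdn /= modnDmr modn_dvdm // -{1}(mod0n m) -(eqn_modDl x) addn0.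
have -> : x + (y + (n.+1 - x)) = y + n.+1 by have := ltn_ord x; lia.
by rewrite -modnDmr (eqP m_dvd) addn0 eq_sym.
Qed.

Section Inflation.
Variables u m v : nat.
Hypothesis uv : u * m = v.

Lemma inflate_ord_subproof (s : 'I_m) (a : 'I_u) : s + m * a < v.
Proof. by rewrite -uv; have := ltn_ord s; have := ltn_ord a; nia. Qed.

Definition inflate_ord (s : 'I_m) (a : 'I_u) : 'I_v := Ordinal (inflate_ord_subproof s a).

Lemma factor_gt0 (x : 'I_v) : 0 < m.
Proof.
have lt_x : x < u * m by rewrite uv; apply: ltn_ord.
by move: lt_x; case: (m); rewrite ?muln0.
Qed.

Lemma deflate_ord_subproof (x : 'I_v) : x %/ m < u.
Proof. by rewrite ltn_divLR ?uv // (factor_gt0 x). Qed.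

Definition deflate_ord (x : 'I_v) : 'I_u := Ordinal (deflate_ord_subproof x).

Lemma inflate_ordP s a x : (inflate_ord s a == x) = (x %% m == s) && (deflate_ord x == a).
Proof.
rewrite -!val_eqE /=; have lt_sm := ltn_ord s.
apply/eqP/andP => [<- | [/eqP <- /eqP <-]]; last by rewrite addnC mulnC -divn_eq.
by rewrite addnC mulnC modnMDl divnMDl ?modn_small ?divn_small ?addn0 //; lia.
Qed.

Lemma inflate_ordK s : cancel (inflate_ord s) deflate_ord.
Proof. by move=> a; have := inflate_ordP s a (inflate_ord s a); rewrite eqxx => /esym/andP[_ /eqP]. Qed.

Lemma mem_inflate_arcs s (A : seq ('I_u * 'I_u)) (x y : 'I_v) :
  ((x, y) \in [seq (inflate_ord s p.1, inflate_ord s p.2) | p <- A])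
  = [&& x %% m == s, y %% m == s & (deflate_ord x, deflate_ord y) \in A].
Proof.
apply/mapP/and3P => [[[a b] ab_in [xE yE]] | [xs ys xy_in]].
  have /andP[xs /eqP xa] : (x %% m == s) && (deflate_ord x == a) by rewrite -inflate_ordP xE.
  have /andP[ys /eqP yb] : (y %% m == s) && (deflate_ord y == b) by rewrite -inflate_ordP yE.
  by rewrite xs ys xa yb.
by exists (deflate_ord x, deflate_ord y) => //; congr pair; apply/esym/eqP; rewrite inflate_ordP ?xs ?ys eqxx.
Qed.

Definition inflate (B : seq (7.-tuple 'I_u)) : seq (7.-tuple 'I_v) :=
  [seq map_tuple (inflate_ord s) b | s <- enum 'I_m, b <- B].

Lemma inflate_decomposition i : has_D_decomposition u i ->
  exists B : seq (7.-tuple 'I_v), (forall b, b \in B -> uniq b) /\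
    forall x y : 'I_v, x != y ->
      count (fun b => (x, y) \in block_arcs i b) B = (x %% m == y %% m).
Proof.
case=> B [uB cB]; exists (inflate B); split.
  move=> _ /allpairsP[[s b] [_ /uB ub ->]].
  by rewrite map_inj_uniq //; apply: can_inj (inflate_ordK s).
move=> x y neq_xy; rewrite /inflate count_flatten sumnE !big_map.
under eq_bigr => s _.
  rewrite count_map (eq_count (a2 := fun b => ((x %% m == s) && (y %% m == s))
            && ((deflate_ord x, deflate_ord y) \in block_arcs i b))); last first.
    by move=> b; rewrite /= !block_arcsE shape_arcs_map mem_inflate_arcs andbA.
  rewrite count_andl.
  over.
have [xy_m | nxy_m] := eqVneq (x %% m) (y %% m); last first.
  rewrite big1 // => s _; apply/eqP; rewrite muln_eq0 eqb0; apply/orP; left.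
  by apply: contra nxy_m => /andP[/eqP -> /eqP ->].
have neq_def : deflate_ord x != deflate_ord y.
  apply: contra neq_xy => /eqP /(congr1 val) /= xy_div; apply/eqP/val_inj.
  by rewrite /= (divn_eq x m) (divn_eq y m) xy_div xy_m.
under eq_bigr do rewrite cB // muln1 -xy_m andbb.
by rewrite -count_sumE -enumT count_enum_ord_eq // ltn_pmod // (factor_gt0 x).
Qed.

End Inflation.

Definition K7_blocks (i : nat) : seq (seq nat) :=
  match i with
  | 1 => [:: [::1;0;2;3;4;5;6]; [::1;2;0;3;6;5;4]; [::1;3;0;4;6;2;5]; [::3;1;4;2;6;0;5]; [::2;1;5;0;6;4;3]; [::0;1;6;3;5;2;4]]
  | 2 => [:: [::1;0;2;3;4;5;6]; [::1;2;0;3;6;5;4]; [::1;3;6;0;4;2;5]; [::2;6;1;4;0;5;3]; [::6;0;1;3;5;2;4]; [::0;5;1;2;6;4;3]]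
  | 3 => [:: [::1;0;2;3;4;5;6]; [::1;2;3;0;4;6;5]; [::1;3;5;0;6;2;4]; [::0;1;2;5;3;6;4]; [::0;6;3;1;4;2;5]; [::0;2;6;1;5;4;3]]
  | 4 => [:: [::1;0;2;3;4;5;6]; [::1;2;0;3;6;5;4]; [::1;3;0;4;6;2;5]; [::2;1;3;6;4;0;5]; [::6;1;4;2;3;5;0]; [::4;2;6;0;1;5;3]]
  | 5 => [:: [::1;0;2;3;4;5;6]; [::1;2;0;3;6;5;4]; [::1;3;0;4;6;2;5]; [::3;6;2;1;5;0;4]; [::3;2;4;1;6;0;5]; [::4;6;0;1;3;5;2]]
  | 6 => [:: [::1;0;2;3;4;5;6]; [::1;2;0;3;5;6;4]; [::1;3;6;0;4;2;5]; [::2;3;4;0;5;1;6]; [::6;0;1;4;2;5;3]; [::0;3;1;2;6;4;5]]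
  | _ => [:: [::1;0;2;3;4;5;6]; [::1;2;3;0;4;6;5]; [::1;3;5;0;6;2;4]; [::0;1;2;5;4;3;6]; [::0;5;3;1;6;4;2]; [::6;2;5;1;4;0;3]]
  end.

Definition nat_arcs (i : nat) (L : seq nat) : seq (nat * nat) :=
  [seq (nth 0 L p.1, nth 0 L p.2) | p : 'I_7 * 'I_7 <- Dshape i].

Definition K7_blocks_ok (i : nat) : bool :=
  all (fun q => [&& size q == 7, all (fun a => a <= 6) q & uniq q]) (K7_blocks i) &&
  all (fun a => all (fun b =>
      (a == b) || (count (fun q => (a, b) \in nat_arcs i q) (K7_blocks i) == 1))
    (iota 0 7)) (iota 0 7).

Lemma mem_cycle_of_arcs n i L (x y : 'I_n.+1) : all (fun a => a <= n) L ->
  ((x, y) \in shape_arcs i (cycle_of n L)) = ((val x, val y) \in nat_arcs i L).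
Proof.
move=> /allP le_L; have le_nth t : nth 0 L t <= n.
  by case: (ltnP t (size L)) => [/(mem_nth 0)/le_L | /(nth_default 0) ->].
rewrite /shape_arcs /nat_arcs; apply/mapP/mapP => -[p p_in xyE]; exists p => //.
  by case: xyE => -> ->; rewrite /cycle_of !tnth_mktuple /= !modn_small ?ltnS ?le_nth.
case: xyE => xE yE; rewrite /cycle_of !tnth_mktuple.
by congr pair; apply: val_inj; rewrite /= modn_small ?ltnS ?le_nth.
Qed.

Lemma has_D_decomposition_7 i : 1 <= i <= 7 -> has_D_decomposition 7 i.
Proof.
move=> i_range; have /andP[/allP blocks_ok /allP arcs_once] : K7_blocks_ok i.
  by case: i i_range => [|[|[|[|[|[|[|[|i]]]]]]]] // _; vm_compute.
exists (map (cycle_of 6) (K7_blocks i)); split.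
  by move=> _ /mapP[q /blocks_ok /and3P[/eqP size_q le_q uq] ->]; apply: cycle_of_uniq.
move=> x y neq_xy; rewrite count_map.
rewrite (eq_in_count (a2 := fun q => (val x, val y) \in nat_arcs i q)) => [|q /blocks_ok /and3P[_ le_q _]]; last first.
  by rewrite /= block_arcsE mem_cycle_of_arcs.
have x_in : val x \in iota 0 7 by rewrite mem_iota ltn_ord.
have y_in : val y \in iota 0 7 by rewrite mem_iota ltn_ord.
by have /allP /(_ _ y_in) := arcs_once _ x_in; rewrite val_eqE (negbTE neq_xy) => /eqP.
Qed.

Lemma has_D_decomposition_14k7 k i : 1 <= i <= 7 -> has_D_decomposition (14*k+6).+1 i.
Proof.
move=> i_range; have v_eq : 7 * (2*k+1) = (14*k+6).+1 by lia.
have [B7 [uB7 cB7]] := inflate_decomposition v_eq (has_D_decomposition_7 i_range).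
set C := cycle_family (14*k+6) k (cycleB k).
exists (develop (C ++ map negate C) ++ B7); split.
  move=> b; rewrite mem_cat => /orP[|/uB7 //].
  exact: (cycle_family_develop_uniq (@cycleB_uniq k)).
move=> x y neq_xy; have m_dvd : 2*k+1 %| (14*k+6).+1 by rewrite -v_eq dvdn_mull.
rewrite count_cat cB7 // -(dvdn_val_subr _ _ m_dvd) -count_multiples; last first.
  by rewrite val_subr_gt0 // v_eq ltn_ord.
exact: (cyclic_count i_range (@cycleB_uniq k) (@cycleB_edges k) (diffsB_perm k) neq_xy).
Qed.

Theorem corollary1p6 (v : nat) :
  7 <= v -> (v %% 14 == 1) || (v %% 14 == 7) ->
  forall i : nat, 1 <= i <= 7 -> has_D_decomposition v i.
Proof.
move=> _ v_mod i i_range; rewrite (divn_eq v 14); set k := v %/ 14.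
case/orP: v_mod => /eqP ->.
  have -> : k * 14 + 1 = (14 * k).+1 by lia.
  exact: has_D_decomposition_14k1.
have -> : k * 14 + 7 = (14 * k + 6).+1 by lia.
exact: has_D_decomposition_14k7.
Qed.
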